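(* Let $F$ be a finite field with $q=|F|$. Let $r,m,n\in\mathbb{N}$ satisfy $m\le n$. Then the number of $(m+n+1)$-tuples $x\in F^{m+n+1}$ satisfying $\operatorname{rank}(H_{m,n}(x))=r$ equals $1$ if $r=0$; $q^{2r-2}(q^2-1)$ if $0<r\le m$; $q^{2r-2}(q^{n-m+1}-1)$ if $r=m+1$; and $0$ if $r>m+1$.
   Context: $\mathbb{N}=\{0,1,2,\ldots\}$. For $N\in\mathbb{N}$, $x=(x_0,\ldots,x_N)\in F^{N+1}$ and integers $p,p'\ge -1$ with $p+p'\le N$, the Hankel matrix $H_{p,p'}(x)$ is the $(p+1)\times(p'+1)$ matrix $(x_{i+j})_{0\le i\le p,\,0\le j\le p'}$. *)

From mathcomp Require Import all_boot all_order all_algebra.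
Set Implicit Arguments. Unset Strict Implicit. Unset Printing Implicit Defensive.
Import GRing.Theory.
Local Open Scope ring_scope.

(* Hankel matrix H_{p,p'}(x) = (x_{i+j})_{0<=i<=p, 0<=j<=p'} for
   x = (x_0,...,x_N) with p + p' <= N.  Here we take N = p + p', the case
   needed (x in F^{m+n+1}).  inord (i+j) is exact since i + j <= p + p'. *)
Definition hankel (F : Type) (p p' : nat) (x : {ffun 'I_(p + p').+1 -> F})
  : 'M[F]_(p.+1, p'.+1) :=
  \matrix_(i < p.+1, j < p'.+1) x (inord (i + j)).

Definition hankel_rank_count (F : finFieldType) (m n r : nat) : nat :=
  #|[set x : {ffun 'I_(m + n).+1 -> F} | \rank (hankel x) == r]|.

From mathcomp Require Import all_boot all_order all_algebra zify.
Set Implicit Arguments. Unset Strict Implicit. Unset Printing Implicit Defensive.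
Import GRing.Theory.

(* For x = (x_0, ..., x_N) write H_k(x) = H_{k,N-k}(x) and rho_k(x) for its
   rank (hankel_rank).  The proof has three ingredients.
   1. Rank profile.  If H_{k,c+1}(x) has a nonzero left kernel K, then the
      left kernel of H_{k+1,c}(x) contains the shifted copy (0,K) and the
      padded copy (K,0), which together span more than dim K; hence
      rank H_{k+1,c}(x) <= rank H_{k,c+1}(x).  With H^T = H' this yields, for
      s <= m and 2m <= N:  rho_m(x) <= s  <->  rho_s(x) <= s.
   2. Double counting.  For v <> 0 the map x |-> v H_{k,c}(x) is the linear
      map "convolution with v", of full rank c+1, so it kills q^k sequences x;
      hence  sum_x |ker H_k(x)| = q^(N+1) + (q^(k+1) - 1) q^k.
   3. Writing |ker H_k(x)| = q^(k+1-rho_k(x)) as 1 + (q-1) sum_(s<=k)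
      [rho_k(x) <= s] q^(k-s) and using 1., the numbers
      B_s = #{x | rho_s(x) <= s} satisfy a triangular system whose solution
      is B_s = q^(2s) for 2s <= N.
   For m <= n this gives #{x | rank H_{m,n}(x) <= s} = q^(2s) for s <= m,
   while the rank never exceeds m+1; the corollary follows by differences. *)

Lemma weighted_sum_recr (b : nat -> nat) q k :
  \sum_(s < k.+2) b s * q ^ (k.+1 - s) =
  q * \sum_(s < k.+1) b s * q ^ (k - s) + b k.+1.
Proof.
rewrite big_ord_recr /= subnn expn0 muln1 big_distrr /=; congr (_ + _).
by apply: eq_bigr => s _; rewrite subSn ?expnS 1?mulnCA // -ltnS.
Qed.

(* (p+1)^(k+1-r) - 1 = p * (sum of (p+1)^(k-s) over r <= s <= k): the
   geometric-series form in which kernel sizes are expanded. *)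
Lemma pow_sub_expansion p k r : r <= k.+1 ->
  p.+1 ^ (k.+1 - r) = 1 + p * \sum_(s < k.+1) (r <= s) * p.+1 ^ (k - s).
Proof.
elim: k r => [|k IH] r hr.
  rewrite big_ord1 subnn expn0 muln1.
  by case: r hr => [|[|r]] //= _; rewrite ?subn0 ?expn1 ?subnn ?expn0; lia.
rewrite (weighted_sum_recr (fun s => nat_of_bool (r <= s))).
have [hrk | hkr] := leqP r k.+1.
  by rewrite subSn // expnS IH //=; nia.
have -> : r = k.+2 by lia.
rewrite subnn big1 ?muln0 ?addn0 // => s _.
by rewrite leqNgt (leq_trans (ltn_ord s)) // muln0.
Qed.

(* The triangular system satisfied by the counts B_s has the unique
   solution B_s = (p+1)^(2s). *)
Lemma triangular_powers p K (b : nat -> nat) : 0 < p ->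
  (forall k, k <= K ->
     p * \sum_(s < k.+1) b s * p.+1 ^ (k - s) = (p.+1 ^ k.+1 - 1) * p.+1 ^ k) ->
  b K = p.+1 ^ (2 * K).
Proof.
move=> p_gt0 hb; apply/eqP; rewrite -(eqn_pmul2l p_gt0); apply/eqP.
case: K hb => [|k] hb.
  have := hb 0 (leqnn 0); rewrite big_ord1 muln0 !expn0 expn1 !muln1 subn1.
  by move=> ->.
have := hb k.+1 (leqnn _); have := hb k (leqnSn k).
rewrite weighted_sum_recr; set S := \sum_(s < k.+1) _.
have -> : 2 * k.+1 = k + k + 2 by lia.
rewrite !expnS !expnD (expnS _ 1) expn1.
have : 0 < p.+1 ^ k by rewrite expn_gt0.
set Q := p.+1 ^ k; nia.
Qed.

Lemma card_set_sum (T : finType) (P : pred T) :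
  #|[set t | P t]| = (\sum_t (P t : nat))%N.
Proof.
by rewrite -sum1_card big_mkcond; apply: eq_bigr => t _; rewrite inE; case: (P t).
Qed.

Lemma card_le_succ (T : finType) (f : T -> nat) r :
  #|[set t | (f t <= r.+1)%N]| = (#|[set t | (f t <= r)%N]| + #|[set t | f t == r.+1]|)%N.
Proof.
rewrite !card_set_sum -big_split /=; apply: eq_bigr => t _.
by rewrite leq_eqVlt ltnS; case: eqP => [->|_]; rewrite ?ltnn ?addn0.
Qed.

(* The Hankel matrix (x_(i+j)) with k+1 rows and c+1 columns built from an
   arbitrary sequence x_0..x_N; entries beyond N never occur when k + c <= N. *)
Definition hankel_mx (F : Type) N k c (x : 'I_N.+1 -> F) : 'M[F]_(k.+1, c.+1) :=
  \matrix_(i < k.+1, j < c.+1) x (inord (i + j)).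

Local Open Scope ring_scope.

Section RankProfile.
Variable F : fieldType.

Lemma hankel_mx_tr N k c (x : 'I_N.+1 -> F) :
  (hankel_mx k c x)^T = hankel_mx c k x.
Proof. by apply/matrixP => i j; rewrite !mxE addnC. Qed.

(* Shifting row vectors one place right (prepend a zero) and padding them on
   the right with a zero; both map the left kernel of H_{k,c+1} into that of
   H_{k+1,c}. *)
Definition shift_mx r n (A : 'M[F]_(r, n)) : 'M_(r, 1 + n) := row_mx 0 A.

Definition pad_mx r n (A : 'M[F]_(r, n.+1)) : 'M_(r, n.+2) :=
  \matrix_(a < r, i < n.+2) if (i < n.+1)%N then A a (inord i) else 0.

Lemma shift_mxE r n (A : 'M[F]_(r, n.+1)) a (i : 'I_n.+2) :
  shift_mx A a i = if nat_of_ord i is i'.+1 then A a (inord i') else 0.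
Proof.
rewrite mxE; case: splitP => j /= ->; first by rewrite [j]ord1 mxE.
by rewrite add1n inord_val.
Qed.

Lemma hankel_shift_ker r N k c (x : 'I_N.+1 -> F) (A : 'M_(r, k.+1)) :
  A *m hankel_mx k c.+1 x = 0 -> shift_mx A *m hankel_mx k.+1 c x = 0.
Proof.
move=> AH0; apply/matrixP => a j.
transitivity ((A *m hankel_mx k c.+1 x) a (lift ord0 j)); last by rewrite AH0 !mxE.
rewrite !mxE big_ord_recl shift_mxE mul0r add0r; apply: eq_bigr => i _.
rewrite shift_mxE lift0 inord_val !mxE; congr (_ * x (inord _)).
by rewrite /= /bump /=; lia.
Qed.

Lemma hankel_pad_ker r N k c (x : 'I_N.+1 -> F) (A : 'M_(r, k.+1)) :
  A *m hankel_mx k c.+1 x = 0 -> pad_mx A *m hankel_mx k.+1 c x = 0.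
Proof.
move=> AH0; apply/matrixP => a j.
transitivity ((A *m hankel_mx k c.+1 x) a (widen_ord (leqnSn _) j)).
  by rewrite !mxE big_ord_recr /= mxE ltnn mul0r addr0; apply: eq_bigr => i _;
     rewrite !mxE /= ltn_ord inord_val.
by rewrite AH0 !mxE.
Qed.

(* Some padded row of a nonzero K lies outside the span of the shifted rows:
   take the least column d on which K does not vanish and a row a of K with
   K a d <> 0; every shifted combination of rows of K vanishes at d. *)
Lemma pad_notin_shift r n (K : 'M[F]_(r, n.+1)) : K != 0 ->
  exists a, ~~ (pad_mx (row a K) <= shift_mx K)%MS.
Proof.
case/matrix0Pn => a0 [i0 K0].
pose nzcol i := [exists a, K a i != 0].
have nz_i0 : nzcol i0 by apply/existsP; exists a0.
have [d /existsP[a Kad] d_min] := arg_minnP val nz_i0.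
exists a; apply/negP => /submxP[D].
rewrite /shift_mx (mul_mx_row D (0 : 'M_(r, 1)) K) mulmx0 -/(shift_mx _) => eD.
have := congr1 (fun M : 'rV_(n.+2) => M 0 (widen_ord (leqnSn _) d)) eD.
have wd : widen_ord (leqnSn n.+1) d = d :> nat by [].
rewrite /= shift_mxE mxE wd ltn_ord inord_val mxE {wd}.
case: d Kad d_min => [[|d] lt_d] //= Kad d_min; first by move/eqP; rewrite (negbTE Kad).
have col0 : forall l, K l (inord d) = 0.
  move=> l; apply/eqP; apply: contraT => Kld.
  have := d_min (inord d) (introT existsP (ex_intro _ l Kld)).
  by rewrite /= inordK //; lia.
rewrite mxE big1 => [|l _]; last by rewrite col0 mulr0.
by move/eqP; rewrite (negbTE Kad).
Qed.

(* The shift lemma: if H_{k,c+1}(x) does not have full row rank, then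
   rank H_{k+1,c}(x) <= rank H_{k,c+1}(x), since its left kernel is bigger. *)
Lemma hankel_rank_shift N k c (x : 'I_N.+1 -> F) :
  (\rank (hankel_mx k c.+1 x) <= k)%N ->
  (\rank (hankel_mx k.+1 c x) <= \rank (hankel_mx k c.+1 x))%N.
Proof.
set H := hankel_mx k c.+1 x; set H' := hankel_mx k.+1 c x => rankH.
have K_nz : kermx H != 0.
  by rewrite -mxrank_eq0 mxrank_ker subn_eq0 -ltnNge ltnS.
have [a pad_new] := pad_notin_shift K_nz.
have KH : kermx H *m H = 0 := mulmx_ker H.
have in_ker : (shift_mx (kermx H) + pad_mx (row a (kermx H)) <= kermx H')%MS.
  rewrite addsmx_sub !sub_kermx hankel_shift_ker // hankel_pad_ker ?eqxx //.
  by rewrite -row_mul KH row0.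
have grows :
  (\rank (kermx H) < \rank (shift_mx (kermx H) + pad_mx (row a (kermx H))))%N.
  rewrite -(rank_row_0mx 1 (kermx H)) -/(shift_mx _); apply: rank_ltmx.
  by rewrite ltmxE addsmxSl /= addsmx_sub submx_refl.
have := mxrankS in_ker; rewrite !mxrank_ker in grows *.
by have := rank_leq_row H'; lia.
Qed.

Definition hankel_rank N (x : 'I_N.+1 -> F) k := \rank (hankel_mx k (N - k) x).

Lemma hankel_rank_up N (x : 'I_N.+1 -> F) k : (k < N)%N ->
  (hankel_rank x k <= k)%N -> (hankel_rank x k.+1 <= hankel_rank x k)%N.
Proof.
by move=> kN; rewrite /hankel_rank -(subnSK kN); apply: hankel_rank_shift.
Qed.

Lemma hankel_rank_down N (x : 'I_N.+1 -> F) k : (0 < k)%N -> (k + k <= N)%N ->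
  (hankel_rank x k <= k)%N -> (hankel_rank x k.-1 <= hankel_rank x k)%N.
Proof.
case: k => // k _ kN /=; rewrite /hankel_rank.
rewrite -(mxrank_tr (hankel_mx k.+1 _ x)) -(mxrank_tr (hankel_mx k _ x)) !hankel_mx_tr.
rewrite -(subnSK (_ : k < N)%N) => [rank_le|]; last by lia.
by apply: hankel_rank_shift; lia.
Qed.

Lemma hankel_rank_profile N (x : 'I_N.+1 -> F) m s :
  (s <= m)%N -> (m + m <= N)%N ->
  (hankel_rank x m <= s)%N = (hankel_rank x s <= s)%N.
Proof.
move=> sm mN; apply/idP/idP => h.
  have down t : (t <= m - s)%N -> (hankel_rank x (m - t) <= hankel_rank x m)%N.
    elim: t => [|t IH] ht; first by rewrite subn0.
    have IHt := IH (ltnW ht); apply: leq_trans (IHt).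
    rewrite -(subnSK (_ : t < m)%N) in IHt *; last by lia.
    by apply: hankel_rank_down; lia.
  by have := down (m - s)%N (leqnn _); rewrite subKn //; lia.
have up t : (s + t <= m)%N -> (hankel_rank x (s + t) <= hankel_rank x s)%N.
  elim: t => [|t IH] ht; first by rewrite addn0.
  have IHt : (hankel_rank x (s + t) <= hankel_rank x s)%N by apply: IH; lia.
  apply: leq_trans (IHt).
  by rewrite addnS; apply: hankel_rank_up; lia.
by have := up (m - s)%N; rewrite subnKC //; move/(_ (leqnn _)); lia.
Qed.

End RankProfile.

Section Counting.
Variable F : finFieldType.
Local Notation q := #|F|.

Lemma card_rowspace m n (B : 'M[F]_(m, n)) :
  #|[set v : 'rV_n | (v <= B)%MS]| = (q ^ \rank B)%N.
Proof.
have inj := @row_free_inj _ 1 _ _ _ (row_base_free B).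
have -> : [set v : 'rV_n | (v <= B)%MS] =
          [set u *m row_base B | u in [set: 'rV_(\rank B)]].
  apply/setP => v; rewrite inE; apply/idP/imsetP.
    by rewrite -(eq_row_base B) => /submxP[D ->]; exists D; rewrite ?inE.
  by case=> u _ ->; rewrite -(eq_row_base B) submxMl.
by rewrite card_imset // cardsT card_mx mul1n.
Qed.

Lemma card_ker m n (A : 'M[F]_(m, n)) :
  #|[set v : 'rV_m | v *m A == 0]| = (q ^ (m - \rank A))%N.
Proof.
rewrite -mxrank_ker -card_rowspace; apply: eq_card => v.
by rewrite !inE sub_kermx.
Qed.

Lemma last_nonzero n (v : 'rV[F]_n.+1) : v != 0 ->
  exists d : 'I_n.+1, v 0 d != 0 /\ forall i : 'I_n.+1, (d < i)%N -> v 0 i = 0.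
Proof.
case/rV0Pn => i0 vi0.
have [d vd d_max] := @arg_maxnP _ i0 (fun i => v 0 i != 0) val vi0.
exists d; split => // i lt_di; apply/eqP; apply: contraTT lt_di => vi.
by rewrite -leqNgt; apply: d_max.
Qed.

(* The (N+1) x (c+1) matrix of convolution with v: v H_{k,c}(x) is the row
   (x_0..x_N) times conv_mx N c v. *)
Definition conv_mx N c k (v : 'rV[F]_k.+1) : 'M[F]_(N.+1, c.+1) :=
  \matrix_(a < N.+1, j < c.+1) \sum_(i < k.+1) v 0 i * ((a : nat) == (i + j)%N)%:R.

Lemma hankel_mul_conv N k c (v : 'rV[F]_k.+1) (x : 'I_N.+1 -> F) :
  (k + c <= N)%N -> v *m hankel_mx k c x = (\row_a x a) *m conv_mx N c v.
Proof.
move=> kcN; apply/matrixP => a j; rewrite [a]ord1 !mxE.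
under [RHS]eq_bigr do rewrite !mxE mulr_sumr.
rewrite exchange_big /=; apply: eq_bigr => i _.
have ij_lt : (i + j < N.+1)%N by have := ltn_ord i; have := ltn_ord j; lia.
rewrite (bigD1 (Ordinal ij_lt)) //= big1 ?addr0 => [|b /eqP b_ne].
  by rewrite eqxx mulr1 mulrC mxE; congr (x _ * _); apply: val_inj; rewrite /= inordK.
have -> : ((b : nat) == (i + j)%N) = false.
  by apply/eqP => e; apply: b_ne; apply: val_inj.
by rewrite !mulr0.
Qed.

(* Convolution with a nonzero v is injective on sequences of length c+1
   (compare the last nonzero terms), so conv_mx has full column rank. *)
Lemma conv_mx_rank N k c (v : 'rV[F]_k.+1) : v != 0 -> (k + c <= N)%N ->
  \rank (conv_mx N c v) = c.+1.
Proof.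
move=> v_nz kcN; rewrite -mxrank_tr; apply/eqP; apply: inj_row_free => y yM0.
apply/eqP; apply: contraT => y_nz.
have [j [yj j_max]] := last_nonzero y_nz.
have [d [vd d_max]] := last_nonzero v_nz.
have jd_lt : (j + d < N.+1)%N by have := ltn_ord j; have := ltn_ord d; lia.
have := congr1 (fun M : 'rV_N.+1 => M 0 (Ordinal jd_lt)) yM0.
rewrite mxE (bigD1 j) //= big1 ?addr0 => [|j' /eqP j'_ne].
  rewrite !mxE (bigD1 d) //= big1 ?addr0 => [|i /eqP i_ne].
    by rewrite addnC eqxx mulr1 => /eqP; rewrite !mulf_eq0 (negbTE yj) (negbTE vd).
  have -> : (j + d == i + j)%N = false.
    by apply/eqP => e; apply: i_ne; apply: val_inj => /=; lia.
  by rewrite mulr0.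
rewrite !mxE; have [->|yj'] := eqVneq (y 0 j') 0; first by rewrite mul0r.
have lt_j'j : (j' < j)%N.
  have : (j' : nat) <> j by move=> e; apply: j'_ne; apply: val_inj.
  by have := contra (fun h => introT eqP (j_max j' h)) yj'; rewrite -leqNgt; lia.
rewrite big1 ?mulr0 // => i _.
have [e|] := eqVneq (j + d)%N (i + j')%N; last by rewrite mulr0.
by rewrite d_max ?mul0r //; lia.
Qed.

Lemma card_ffun_row N (P : pred 'rV[F]_N) :
  #|[set x : {ffun 'I_N -> F} | P (\row_a x a)]| = #|[set y : 'rV_N | P y]|.
Proof.
pose row_of (x : {ffun 'I_N -> F}) : 'rV_N := \row_a x a.
pose ffun_of (y : 'rV_N) : {ffun 'I_N -> F} := [ffun a => y 0 a].
have row_ofK : cancel row_of ffun_of.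
  by move=> x; apply/ffunP => a; rewrite !ffunE mxE.
have ffunK : cancel ffun_of row_of.
  by move=> y; apply/matrixP => i a; rewrite [i]ord1 mxE ffunE.
rewrite -(card_imset _ (can_inj row_ofK)); apply: eq_card => y.
rewrite [y \in [set _ | _]]inE; apply/imsetP/idP => [[x]|Py].
  by rewrite inE => Px ->.
by exists (ffun_of y); rewrite ?inE; have := ffunK y; rewrite /row_of => ->.
Qed.

Lemma card_annihilated N k c (v : 'rV[F]_k.+1) : v != 0 -> (k + c)%N = N ->
  #|[set x : {ffun 'I_N.+1 -> F} | v *m hankel_mx k c x == 0]| = (q ^ k)%N.
Proof.
move=> v_nz kcN.
have -> : [set x : {ffun 'I_N.+1 -> F} | v *m hankel_mx k c x == 0] =
          [set x : {ffun 'I_N.+1 -> F} | (\row_a x a) *m conv_mx N c v == 0].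
  by apply/setP => x; rewrite !inE hankel_mul_conv // kcN.
rewrite (card_ffun_row (fun y => y *m conv_mx N c v == 0)) card_ker.
by rewrite conv_mx_rank ?kcN //; congr (_ ^ _)%N; lia.
Qed.

(* Double counting pairs (x, v) with v H_{k,c}(x) = 0. *)
Lemma sum_card_ker N k c : (k + c)%N = N ->
  (\sum_(x : {ffun 'I_N.+1 -> F}) #|[set v : 'rV_k.+1 | v *m hankel_mx k c x == 0%R]|)%N
  = (q ^ N.+1 + (q ^ k.+1 - 1) * q ^ k)%N.
Proof.
move=> kcN; under eq_bigr do rewrite card_set_sum.
rewrite exchange_big /= (bigD1 0) //=; congr (_ + _)%N.
  under eq_bigr do rewrite mul0mx eqxx.
  by rewrite sum1_card card_ffun card_ord.
rewrite (eq_bigr (fun _ => q ^ k)%N) => [|v v_nz]; last first.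
  by rewrite -card_set_sum card_annihilated.
rewrite sum_nat_const; congr (_ * _)%N.
have -> : #|[pred v : 'rV[F]_k.+1 | v != 0]| = #|predC1 (0 : 'rV[F]_k.+1)|.
  by apply: eq_card.
by rewrite cardC1 card_mx mul1n subn1.
Qed.

Definition count_rank_le N s :=
  #|[set x : {ffun 'I_N.+1 -> F} | (hankel_rank x s <= s)%N]|.

Lemma card_ker_expansion N k (x : 'I_N.+1 -> F) : (k + k <= N)%N ->
  #|[set v : 'rV_k.+1 | v *m hankel_mx k (N - k) x == 0]| =
  (1 + q.-1 * \sum_(s < k.+1) (hankel_rank x s <= s) * q ^ (k - s))%N.
Proof.
move=> kN; have q_gt0 : (0 < q)%N by apply: ltnW (card_finNzRing_gt1 F).
rewrite card_ker -(prednK q_gt0) pow_sub_expansion ?rank_leq_row //.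
congr (1 + _ * _)%N; apply: eq_bigr => s _.
by rewrite -(hankel_rank_profile x (m := k)) //; have := ltn_ord s; lia.
Qed.

(* Summing the expansion over x gives the triangular system for B_s. *)
Lemma count_rank_le_identity N k : (k + k <= N)%N ->
  (q.-1 * \sum_(s < k.+1) count_rank_le N s * q ^ (k - s) =
   (q ^ k.+1 - 1) * q ^ k)%N.
Proof.
move=> kN; have kkN : (k + (N - k))%N = N by lia.
have := sum_card_ker kkN.
under eq_bigr do rewrite card_ker_expansion //.
rewrite big_split /= sum1_card card_ffun card_ord -big_distrr /= exchange_big /=.
under [in X in (_ + _ * X)%N]eq_bigr do rewrite -big_distrl /= -card_set_sum.
by move/addnI.
Qed.

Lemma count_rank_le_value N s : (s + s <= N)%N ->
  count_rank_le N s = (q ^ (2 * s))%N.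
Proof.
move=> sN; have q_gt1 := card_finNzRing_gt1 F.
rewrite -(prednK (ltnW q_gt1)); apply: triangular_powers.
  by rewrite -ltnS prednK // ltnW.
by move=> k ks; rewrite prednK ?(ltnW q_gt1) //; apply: count_rank_le_identity; lia.
Qed.

End Counting.

Section HankelCorollary.
Variables (F : finFieldType) (m n : nat).
Hypothesis le_mn : (m <= n)%N.
Local Notation q := #|F|.

(* At most s <= m: the rank of H_{m,n}(x) is rho_m(x) with N = m + n. *)
Lemma count_hankel_rank_le s : (s <= m)%N ->
  #|[set x : {ffun 'I_(m + n).+1 -> F} | (\rank (hankel x) <= s)%N]| =
  (q ^ (2 * s))%N.
Proof.
move=> sm; rewrite -(@count_rank_le_value F (m + n) s); last by lia.
apply: eq_card => x; rewrite !inE -(hankel_rank_profile x (m := m)) //; last by lia.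
by rewrite /hankel_rank addKn.
Qed.

(* Above m the rank condition is vacuous: H_{m,n} has only m+1 rows. *)
Lemma count_hankel_rank_le_full s : (m < s)%N ->
  #|[set x : {ffun 'I_(m + n).+1 -> F} | (\rank (hankel x) <= s)%N]| =
  (q ^ (m + n).+1)%N.
Proof.
move=> ms; rewrite -[in RHS](card_ord (m + n).+1) -card_ffun; apply: eq_card => x.
by rewrite !inE (leq_trans (rank_leq_row _)).
Qed.

End HankelCorollary.

Theorem corollary2 (F : finFieldType) (r m n : nat) (hmn : (m <= n)%N) :
  let q := #|F| in
  hankel_rank_count F m n r =
    (if r == 0 then 1
     else if (r <= m)%N then q ^ (2 * r - 2) * (q ^ 2 - 1)
     else if r == m.+1 then q ^ (2 * r - 2) * (q ^ (n - m + 1) - 1)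
     else 0)%N.
Proof.
rewrite /hankel_rank_count /=.
case: r => [|r] /=.
  rewrite -(expn0 #|F|) -(muln0 2) -(count_hankel_rank_le F hmn (leq0n m)).
  by apply: eq_card => x; rewrite !inE leqn0.
pose X := {ffun 'I_(m + n).+1 -> F}.
have count_eq s : #|[set x : X | \rank (hankel x) == s.+1]| =
    (#|[set x : X | (\rank (hankel x) <= s.+1)%N]| -
     #|[set x : X | (\rank (hankel x) <= s)%N]|)%N.
  by rewrite card_le_succ addKn.
rewrite count_eq !mulnBr !muln1 -!expnD.
have [le_rm | lt_mr] := leqP r.+1 m.
  by rewrite !count_hankel_rank_le ?(ltnW le_rm) //; congr (_ ^ _ - _ ^ _)%N; lia.
rewrite count_hankel_rank_le_full // eqSS.
have [-> | ne_rm] := eqVneq r m.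
  by rewrite count_hankel_rank_le //; congr (_ ^ _ - _ ^ _)%N; lia.
by rewrite count_hankel_rank_le_full ?subnn //; lia.
Qed.
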